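(* Let $k$ be a positive integer, $S=\{6k+1,6k+2,9k+3\}$ and $G=\langle S\rangle$. For $i\in\mathbb{N}^*=\mathbb{N}\setminus\{0\}$ let $A_{i,k}=[(6k+1)i,\,(6k+1)i+i]$ and $B_{i,k}=[(6k+1)i+(3k+2),\,(6k+1)i+(3k+2)+i-1]$, and let $H_{2,k}=\{0\}\cup\bigcup_{i\in\mathbb{N}^*}(A_{i,k}\cup B_{i,k})$. Then: (1) $H_{2,k}$ is a submonoid of $(\mathbb{N},+,0)$ containing $S$; (2) $A_{i,k}<B_{i,k}$ for every $i\in[1,3k+1]$; (3) $B_{i,k}\le A_{i+1,k}$ for every $i\in[1,3k]$; (4) $[(6k+1)(3k)+(3k+2),\infty[\ \subseteq H_{2,k}$; (5) $G=H_{2,k}$; (6) $H_{2,k}$ is a $3$-permutation numerical semigroup.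
   Context: $\mathbb{N}=\{0,1,2,\dots\}$. A numerical semigroup is a submonoid $G$ of $(\mathbb{N},+,0)$ with $\mathbb{N}\setminus G$ finite; $\langle S\rangle$ is the submonoid generated by $S$. Writing the elements of a numerical semigroup $G$ as $0=g_0<g_1<g_2<\cdots$, $G$ is an $n$-permutation numerical semigroup if $G=\langle\{g_1,\dots,g_n\}\rangle$ and for every $k\in\mathbb{N}$ the tuple $(g_{kn+1}\bmod n,\dots,g_{kn+n}\bmod n)$ contains exactly one representative of each residue class mod $n$. Notation: $[a,b]=\{x\in\mathbb{N}:a\le x\le b\}$, $[a,\infty[=\{x\in\mathbb{N}:x\ge a\}$. For nonempty $A,B\subseteq\mathbb{N}$, $A<B$ (resp. $A\le B$) means $x<y$ (resp. $x\le y$) for all $x\in A$, $y\in B$. *)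

From mathcomp Require Import all_boot.
Set Implicit Arguments. Unset Strict Implicit. Unset Printing Implicit Defensive.

Definition is_submonoid (G : nat -> Prop) : Prop :=
  G 0 /\ forall x y, G x -> G y -> G (x + y).

Inductive gen (S : nat -> Prop) : nat -> Prop :=
| gen0 : gen S 0
| genS s x : S s -> gen S x -> gen S (s + x).

Definition cofinite (G : nat -> Prop) : Prop :=
  exists l : seq nat, forall x, ~ G x -> x \in l.

Definition numerical_semigroup (G : nat -> Prop) : Prop :=
  is_submonoid G /\ cofinite G.

(* enum_at G i x : x = g_i, the i-th element of G in increasing order
   (g_0 < g_1 < ...), i.e. x is in G and exactly i elements of G are < x. *)
Definition enum_at (G : nat -> Prop) (i x : nat) : Prop :=
  G x /\ exists s : seq nat, uniq s /\ size s = i /\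
    forall y, y \in s <-> (G y /\ y < x).

Definition perm_numerical_semigroup (n : nat) (G : nat -> Prop) : Prop :=
  numerical_semigroup G /\
  (forall x, G x <-> gen (fun s => exists j, 1 <= j <= n /\ enum_at G j s) x) /\
  (forall m r, r < n ->
     exists! j, (1 <= j <= n) /\ exists x, enum_at G (m * n + j) x /\ x %% n = r).

Definition S_k (k : nat) (s : nat) : Prop :=
  s = 6 * k + 1 \/ s = 6 * k + 2 \/ s = 9 * k + 3.

Definition A_ik (k i : nat) (x : nat) : Prop :=
  (6 * k + 1) * i <= x <= (6 * k + 1) * i + i.

Definition B_ik (k i : nat) (x : nat) : Prop :=
  (6 * k + 1) * i + (3 * k + 2) <= x <= (6 * k + 1) * i + (3 * k + 2) + i - 1.

Definition H2k (k : nat) (x : nat) : Prop :=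
  x = 0 \/ exists i, 0 < i /\ (A_ik k i x \/ B_ik k i x).

Definition set_lt (A B : nat -> Prop) : Prop := forall x y, A x -> B y -> x < y.
Definition set_le (A B : nat -> Prop) : Prop := forall x y, A x -> B y -> x <= y.

(* Write a = 6k+1 and b = 3k+2.  Since 2b = a + 3, sums of blocks land in
   blocks: A_i + A_j <= A_(i+j), A_i + B_j <= B_(i+j), B_i + B_j <= A_(i+j+1);
   and A_i = i a + [0, i], B_i = (a + b) + A_(i-1) are sums of generators, so
   H2k k = <S>.  For i <= 3k the blocks A_i and B_i are all of H2k k inside
   [a i, a (i+1)), so exactly i^2 elements of H2k k lie below a i.  The last
   elements of A_i and B_i thus have ranks i^2 + i and i^2 + 2i, and the next
   elements of H2k k lie b - i and 3k - i further on.  When these ranks are not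
   multiples of 3, i = 1 resp. i = 2 (mod 3), so both jumps are 1 (mod 3);
   all other steps are +1.  Hence g_(3m+1), g_(3m+2), g_(3m+3) are consecutive
   residues mod 3. *)

From mathcomp Require Import all_boot zify.
Set Implicit Arguments. Unset Strict Implicit.

Lemma gen_mono (S T : nat -> Prop) x :
  (forall s, S s -> T s) -> gen S x -> gen T x.
Proof. by move=> ST; elim=> [|s y /ST Ts _ IH]; [exact: gen0 | exact: genS IH]. Qed.

Lemma gen_min (S G : nat -> Prop) x :
  is_submonoid G -> (forall s, S s -> G s) -> gen S x -> G x.
Proof. by move=> [G0 GD] SG; elim=> // s y /SG Gs _; apply: GD. Qed.

Section Rank.

Variable P : pred nat.

Definition rank x := count P (iota 0 x).

Lemma rankD x l : rank (x + l) = rank x + count P (iota x l).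
Proof. by rewrite /rank iotaD count_cat. Qed.

Lemma rankS x : rank x.+1 = rank x + P x.
Proof. by rewrite -addn1 rankD /= addn0. Qed.

Lemma leq_rank : {homo rank : x y / x <= y}.
Proof. by move=> x y /subnKC <-; rewrite rankD leq_addr. Qed.

Lemma rank_inj : {in P &, injective rank}.
Proof.
have lt_rank x y : P x -> x < y -> rank x < rank y.
  by move=> Px /leq_rank; apply: leq_trans; rewrite rankS Px addn1.
move=> x y Px Py eq_xy; case: (ltngtP x y) => // [/(lt_rank _ _ Px) | /(lt_rank _ _ Py)];
  by rewrite eq_xy ltnn.
Qed.

Lemma rank_full x l : (forall z, x <= z < x + l -> P z) -> rank (x + l) = rank x + l.
Proof.
move=> Pxl; rewrite rankD; congr (_ + _); rewrite -[RHS](size_iota x l).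
by apply/eqP; rewrite -all_count; apply/allP => z; rewrite mem_iota => /Pxl.
Qed.

Lemma rank_gap x l : (forall z, x <= z < x + l -> ~~ P z) -> rank (x + l) = rank x.
Proof.
move=> nPxl; rewrite rankD -[RHS]addn0; congr (_ + _).
by apply/eqP; rewrite -leqn0 leqNgt -has_count; apply/hasPn => z; rewrite mem_iota => /nPxl.
Qed.

Lemma rank_next x y :
  P x -> x < y -> (forall z, x < z < y -> ~~ P z) -> rank y = (rank x).+1.
Proof.
by move=> Px /subnKC <- gap; rewrite rank_gap ?rankS ?Px ?addn1.
Qed.

Lemma rank_succ_next x y y' : P x -> P y -> P y' -> rank y = (rank x).+1 ->
  x < y' -> (forall z, x < z < y' -> ~~ P z) -> y = y'.
Proof.
move=> Px Py Py' rank_y lt_xy' gap.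
by apply: (rank_inj Py Py'); rewrite rank_y (rank_next Px lt_xy' gap).
Qed.

Lemma rank_surj : (exists N, forall z, N <= z -> P z) ->
  forall n, exists2 x, P x & rank x = n.
Proof.
move=> [N PN] n; have [|[|x]] := @ex_minnP (fun x => n < rank x).
- by exists (N + n.+1); rewrite rank_full ?addnS ?ltnS ?leq_addl // => z /andP[/PN].
- by [].
- rewrite rankS => lt_n min_x.
  have le_n : rank x <= n by rewrite leqNgt; apply/negP => /min_x; rewrite ltnn.
  by case Px: (P x) lt_n => /= lt_n; [exists x => //; lia | lia].
Qed.

Variable G : nat -> Prop.
Hypothesis GP : forall x, reflect (G x) (P x).

Lemma enum_atE n x : enum_at G n x <-> P x /\ rank x = n.
Proof.
have memE y : y \in filter P (iota 0 x) = P y && (y < x).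
  by rewrite mem_filter mem_iota.
split=> [[/GP Px [s [uniq_s [<- memP]]]] | [/GP Gx <-]]; split=> //.
  rewrite /rank -size_filter; apply/perm_size/uniq_perm; rewrite ?filter_uniq ?iota_uniq //.
  by move=> y; rewrite memE; apply/andP/idP => [[/GP Gy lt_yx] | /memP[/GP -> ->]];
    [apply/memP|].
exists (filter P (iota 0 x)); split; first by rewrite filter_uniq ?iota_uniq.
split=> [|y]; first by rewrite size_filter.
by rewrite memE; split=> [/andP[/GP Gy lt_yx] | [/GP -> ->]].
Qed.

End Rank.

Section BlockResidues.

Variables (P : pred nat) (G : nat -> Prop) (n : nat).
Hypothesis GP : forall x, reflect (G x) (P x).
Hypothesis P_cofinal : exists N, forall z, N <= z -> P z.
Hypothesis rank_succ_mod : forall x y, P x -> P y ->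
  rank P y = (rank P x).+1 -> rank P x %% n != 0 -> y = x.+1 %[mod n].

Lemma enum_block_residues m r : r < n ->
  exists! j, (1 <= j <= n) /\ exists x, enum_at G (m * n + j) x /\ x %% n = r.
Proof.
move=> lt_rn; have n_gt0 : 0 < n by apply: leq_ltn_trans lt_rn.
have [x1 Px1 rank_x1] := rank_surj P_cofinal (m * n + 1).
have residue j x :
    1 <= j <= n -> P x -> rank P x = m * n + j -> x = x1 + j.-1 %[mod n].
  elim: j x => [|[|j] IH] x // /andP[_ le_jn] Px rank_x.
    by rewrite addn0 (rank_inj Px Px1) // rank_x rank_x1.
  have [y Py rank_y] := rank_surj P_cofinal (m * n + j.+1).
  have y_res : y = x1 + j %[mod n] by apply: IH; rewrite //= ltnW.
  rewrite (rank_succ_mod Py Px); last by rewrite rank_y modnMDl modn_small.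
    by rewrite -addn1 -modnDml y_res modnDml addn1 addnS.
  by rewrite rank_x rank_y addnS.
pose j := (r + n - x1 %% n) %% n.
have lt_jn : j < n by rewrite ltn_mod (leq_ltn_trans _ lt_rn).
have [x Px rank_x] := rank_surj P_cofinal (m * n + j.+1).
have x_r : x %% n = r.
  rewrite (residue j.+1) //= -modnDml modnDmr subnKC; first by rewrite modnDr modn_small.
  by rewrite ltnW // ltn_addl // ltn_pmod.
exists j.+1; split; first by split=> //; exists x; split; first exact/(enum_atE GP).
move=> j' [j'_range [x' [/(enum_atE GP)[Px' rank_x'] x'_r]]].
have /eqP : x1 + j'.-1 = x1 + j %[mod n].
  by rewrite -(residue j' x' j'_range Px' rank_x') x'_r -x_r (residue j.+1 x).
have lt_j'n : j'.-1 < n by case/andP: j'_range => j'_gt0 le_j'n; lia.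
rewrite eqn_modDl !modn_small // => /eqP <-.
by case/andP: j'_range => /prednK.
Qed.

End BlockResidues.

Lemma mod3_mul_succ i : i * i.+1 %% 3 != 0 -> i %% 3 = 1.
Proof.
move: (divn_eq i 3) (ltn_pmod i (isT : 0 < 3)).
by move: (i %/ 3) (i %% 3) => q [|[|[|c]]] -> //; nia.
Qed.

Lemma mod3_mul_succ2 i : i * i.+2 %% 3 != 0 -> i %% 3 = 2.
Proof.
move: (divn_eq i 3) (ltn_pmod i (isT : 0 < 3)).
by move: (i %/ 3) (i %% 3) => q [|[|[|c]]] -> //; nia.
Qed.

Section H2k.

Variable k : nat.

Local Notation a := (6 * k + 1).
Local Notation b := (3 * k + 2).
Local Notation H := (H2k k).

(* A_ik k 0 = [0, 0] and B_ik k 0 = [b, b - 1] is empty, so index 0 accounts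
   for the element 0 of H2k. *)
Lemma H2kE x : H x <-> exists i, A_ik k i x \/ B_ik k i x.
Proof.
split=> [[->|[i [_ ABx]]] | [[|i] ABx]]; first by exists 0; left; rewrite /A_ik muln0.
- by exists i.
- by case: ABx => /andP[]; [left | ]; lia.
- by right; exists i.+1.
Qed.

Lemma mem_H2k_A i x : A_ik k i x -> H x.
Proof. by move=> Ax; apply/H2kE; exists i; left. Qed.

Lemma mem_H2k_B i x : B_ik k i x -> H x.
Proof. by move=> Bx; apply/H2kE; exists i; right. Qed.

Definition inH x : bool :=
  has (fun i => (a * i <= x <= a * i + i) || (a * i + b <= x <= a * i + b + i - 1))
    (iota 0 x.+1).

Lemma H2kP x : reflect (H x) (inH x).
Proof.
apply: (iffP hasP) => [[i _ /orP ABx] | /H2kE[i ABx]]; first by apply/H2kE; exists i.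
exists i; last exact/orP.
by rewrite mem_iota ltnS; case: ABx => /andP[lo _]; nia.
Qed.

Lemma H2k_add x y : H x -> H y -> H (x + y).
Proof.
move=> /H2kE[i [/andP[lo_x hi_x]|/andP[lo_x hi_x]]] /H2kE[j [/andP[lo_y hi_y]|/andP[lo_y hi_y]]].
- by apply: (@mem_H2k_A (i + j)); apply/andP; lia.
- by apply: (@mem_H2k_B (i + j)); apply/andP; lia.
- by apply: (@mem_H2k_B (i + j)); apply/andP; lia.
- by apply: (@mem_H2k_A (i + j).+1); apply/andP; lia.
Qed.

Lemma H2k_submonoid : is_submonoid H.
Proof. by split; [left | exact: H2k_add]. Qed.

Lemma S_k_sub_H2k s : S_k k s -> H s.
Proof.
by case=> [|[|]] ->; [apply: (@mem_H2k_A 1) | apply: (@mem_H2k_A 1) | apply: (@mem_H2k_B 1)];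
  apply/andP; lia.
Qed.

Lemma gen_S_k_A i t : t <= i -> gen (S_k k) (a * i + t).
Proof.
elim: i t => [|i IH] [|t] le_ti //; first by rewrite muln0; exact: gen0.
- by rewrite mulnS addn0 -(addn0 (a * i)); apply: genS; [left | apply: IH].
- rewrite mulnS (_ : a + a * i + t.+1 = (6 * k + 2) + (a * i + t)); last lia.
  by apply: genS; [right; left | apply: IH].
Qed.

Lemma H2k_sub_gen x : H x -> gen (S_k k) x.
Proof.
move=> /H2kE[i [/andP[lo hi]|/andP[lo hi]]].
  by rewrite -(subnKC lo); apply: gen_S_k_A; lia.
case: i lo hi => [|i] lo hi; first lia.
rewrite (_ : x = (9 * k + 3) + (a * i + (x - a * i.+1 - b))); last nia.
by apply: genS; [right; right | apply: gen_S_k_A; nia].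
Qed.

Lemma gen_S_kE x : gen (S_k k) x <-> H x.
Proof. by split=> [|/H2k_sub_gen //]; apply: gen_min H2k_submonoid S_k_sub_H2k. Qed.

Lemma A_lt_B i : i <= 3 * k + 1 -> set_lt (A_ik k i) (B_ik k i).
Proof. by move=> le_i x y /andP[_ hi] /andP[lo _]; lia. Qed.

Lemma B_le_A i : i <= 3 * k -> set_le (B_ik k i) (A_ik k i.+1).
Proof. by move=> le_i x y /andP[_ hi] /andP[lo _]; nia. Qed.

Lemma H2k_conductor x : a * (3 * k) + b <= x -> H x.
Proof.
move=> le_x; rewrite (divn_eq x a); set q := x %/ a; set r := x %% a.
have lt_r : r < a by rewrite ltn_mod addn1.
have le_q : 3 * k <= q.
  rewrite leqNgt; apply/negP => lt_q; have := leq_mul (leqnn a) lt_q; nia.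
have [le_rq | lt_qr] := leqP r q.
  by apply: (@mem_H2k_A q); apply/andP; lia.
by apply: (@mem_H2k_B q); apply/andP; nia.
Qed.

Lemma H2k_window i z : i <= 3 * k -> a * i <= z < a * i.+1 ->
  H z -> A_ik k i z \/ B_ik k i z.
Proof.
move=> le_i /andP[lo hi] /H2kE[j ABz]; suff <- : j = i by [].
case: (ltngtP j i) => // [lt_ji | lt_ij].
  have := leq_mul (leqnn a) lt_ji; case: ABz => /andP[]; nia.
have := leq_mul (leqnn a) lt_ij; case: ABz => /andP[]; nia.
Qed.

Local Notation rankH := (rank inH).

Lemma notH2k_gap i z : i <= 3 * k -> a * i <= z < a * i.+1 ->
  ~ A_ik k i z -> ~ B_ik k i z -> ~~ inH z.
Proof. by move=> le_i z_win nAz nBz; apply/H2kP => /(H2k_window le_i z_win)[]. Qed.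

Lemma rank_A i t : t <= i.+1 -> rankH (a * i + t) = rankH (a * i) + t.
Proof.
by move=> le_t; rewrite rank_full // => z /andP[lo hi]; apply/H2kP/(@mem_H2k_A i)/andP; lia.
Qed.

(* Needed from here on: b <= a, so that B_i ends before A_(i+1) starts. *)
Hypothesis k_gt0 : 0 < k.

Lemma rank_B i t : i <= 3 * k -> t <= i ->
  rankH (a * i + b + t) = rankH (a * i) + i.+1 + t.
Proof.
move=> le_i le_t; have -> : a * i + b + t = a * i + i.+1 + (b - i.+1) + t by lia.
rewrite rank_full => [|z /andP[lo hi]]; last by apply/H2kP/(@mem_H2k_B i)/andP; lia.
rewrite rank_gap => [|z /andP[lo hi]]; first by rewrite rank_A.
by apply: (notH2k_gap le_i) => [|/andP[]|/andP[]]; nia.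
Qed.

Lemma rank_A_start i : i <= 3 * k -> rankH (a * i) = i * i.
Proof.
elim: i => [|i IH] le_i; first by rewrite muln0.
have -> : a * i.+1 = a * i + b + i + (a * i.+1 - (a * i + b + i)) by nia.
rewrite rank_gap => [|z /andP[lo hi]]; first by rewrite rank_B ?IH //; lia.
by apply: (@notH2k_gap i) => [||/andP[]|/andP[]]; nia.
Qed.

Lemma H2k_cofinal : exists N, forall z, N <= z -> inH z.
Proof. by exists (a * (3 * k) + b) => z /H2k_conductor/H2kP. Qed.

Lemma enum_at_S_k s : S_k k s -> exists j, 1 <= j <= 3 /\ enum_at H j s.
Proof.
have rank1 : rankH (a * 1) = 1 by rewrite rank_A_start; lia.
move=> Ss; have /H2kP Hs := S_k_sub_H2k Ss; case: Ss => [|[|]] s_def.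
- exists 1; split=> //; apply/(enum_atE H2kP); split=> //.
  by rewrite s_def (_ : 6 * k + 1 = a * 1 + 0) ?rank_A ?rank1 //; lia.
- exists 2; split=> //; apply/(enum_atE H2kP); split=> //.
  by rewrite s_def (_ : 6 * k + 2 = a * 1 + 1) ?rank_A ?rank1 //; lia.
- exists 3; split=> //; apply/(enum_atE H2kP); split=> //.
  by rewrite s_def (_ : 9 * k + 3 = a * 1 + b + 0) ?rank_B ?rank1 //; lia.
Qed.

Lemma H2k_rank_succ_mod3 x y : inH x -> inH y ->
  rankH y = (rankH x).+1 -> rankH x %% 3 != 0 -> y = x.+1 %[mod 3].
Proof.
move=> Hx Hy rank_y rank_x_mod3; have next y' (Hy' : inH y') := rank_succ_next Hx Hy Hy' rank_y.
have [/(next x.+1) -> // | /H2kP notHx1] := boolP (inH x.+1).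
  by move=> z /andP[lo hi]; lia.
have x_small : x.+1 < a * (3 * k) + b.
  by rewrite ltnNge; apply/negP => /H2k_conductor.
move/H2kP/H2kE: Hx rank_x_mod3 => [i [/andP[lo hi]|/andP[lo hi]]] rank_x_mod3.
- have x_def : x = a * i + i.
    case: (ltngtP x (a * i + i)) => // [lt_x | gt_x]; last lia.
    by case: notHx1; apply: (@mem_H2k_A i); apply/andP; lia.
  have le_i : i <= 3 * k by rewrite leqNgt; apply/negP => lt_i; have := leq_mul (leqnn a) lt_i; nia.
  have rank_x : rankH x = i * i.+1 by rewrite x_def rank_A ?rank_A_start // mulnSr.
  have /mod3_mul_succ i_mod3 : i * i.+1 %% 3 != 0 by rewrite -rank_x.
  rewrite (next (a * i + b)) ?x_def; [lia | | lia | ].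
    by apply/H2kP/(@mem_H2k_B i)/andP; lia.
  by move=> z /andP[lo_z hi_z]; apply: (notH2k_gap le_i) => [|/andP[]|/andP[]]; nia.
- have i_gt0 : 0 < i by case: i lo hi {rank_x_mod3}; lia.
  have x_def : x = a * i + b + i.-1.
    case: (ltngtP x (a * i + b + i.-1)) => // [lt_x | gt_x]; last lia.
    by case: notHx1; apply: (@mem_H2k_B i); apply/andP; lia.
  have lt_i : i < 3 * k by rewrite ltnNge; apply/negP => le_i; have := leq_mul (leqnn a) le_i; nia.
  have rank_x : rankH x = i * i.+2 by rewrite x_def rank_B ?rank_A_start; nia.
  have /mod3_mul_succ2 i_mod3 : i * i.+2 %% 3 != 0 by rewrite -rank_x.
  rewrite (next (a * i.+1)) ?x_def; [nia | | nia | ].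
    by apply/H2kP/(@mem_H2k_A i.+1)/andP; lia.
  by move=> z /andP[lo_z hi_z]; apply: (@notH2k_gap i) => [||/andP[]|/andP[]]; nia.
Qed.

End H2k.

Theorem lemma4p2 (k : nat) (hk : 0 < k) :
  (is_submonoid (H2k k) /\ (forall s, S_k k s -> H2k k s)) /\
  (forall i, 1 <= i <= 3 * k + 1 -> set_lt (A_ik k i) (B_ik k i)) /\
  (forall i, 1 <= i <= 3 * k -> set_le (B_ik k i) (A_ik k i.+1)) /\
  (forall x, (6 * k + 1) * (3 * k) + (3 * k + 2) <= x -> H2k k x) /\
  (forall x, gen (S_k k) x <-> H2k k x) /\
  perm_numerical_semigroup 3 (H2k k).
Proof.
split; first by split; [exact: H2k_submonoid | exact: S_k_sub_H2k].
split; first by move=> i /andP[_]; exact: A_lt_B.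
split; first by move=> i /andP[_]; exact: B_le_A.
split; first exact: H2k_conductor.
split; first exact: gen_S_kE.
split; [split | split].
- exact: H2k_submonoid.
- exists (iota 0 ((6 * k + 1) * (3 * k) + (3 * k + 2))) => x notHx.
  by rewrite mem_iota add0n ltnNge; apply/negP => /H2k_conductor /notHx.
- move=> x; split=> [/H2k_sub_gen | ]; first by apply: gen_mono => s /(enum_at_S_k hk).
  by apply: (gen_min (H2k_submonoid k)) => s [j [_ []]].
- move=> m r; apply: (enum_block_residues (H2kP k) (H2k_cofinal k)) => x y.
  exact: H2k_rank_succ_mod3.
Qed.
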